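(* Let $G=(V,E)$ be a moral DAG and $\pi$ an arbitrary topological ordering of $G$. Let $S=\{s_1,\dots,s_k\}\subseteq V$ with $\pi(s_1)<\pi(s_2)<\dots<\pi(s_k)$. Then every arc $u\to v$ of $G$ with $s_1\in \mathrm{Des}(u)\cap\mathrm{Anc}(v)$ is oriented (directed) in the interventional essential graph $\mathcal{E}_{\{S\}}(G)$.
   Context: A moral DAG is a DAG without v-structures ($u\to x\leftarrow y$ with $u,y$ nonadjacent). $\mathrm{Des}(u)$ and $\mathrm{Anc}(v)$ denote the (strict) descendants of $u$ and ancestors of $v$ in $G$. The interventional essential graph $\mathcal{E}_{\{S\}}(G)$ of the single intervention $S$ is obtained from the skeleton of $G$ by orienting, as in $G$, every edge with exactly one endpoint in $S$ (there are no v-structures), then repeatedly applying Meek rules until none applies: R1 orients $a - b$ as $a\to b$ if $c\to a$ with $c,b$ nonadjacent; R2 if $a\to c\to b$; R3 if $d - a - c$, $d\to b\leftarrow c$, $c,d$ nonadjacent; R4 if $d - a - c$, $d\to c\to b$, $b,d$ nonadjacent. *)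

(* A directed graph on a finite vertex type T is a relation
   g : rel T, where g u v means there is an arc u -> v. *)
From Stdlib Require Import Relations.
From mathcomp Require Import all_boot.
Set Implicit Arguments. Unset Strict Implicit. Unset Printing Implicit Defensive.

Section Graphs.
Variable T : finType.
Implicit Types (g : rel T) (D : {set T * T}).

Definition reach g u v : bool := [exists w, g u w && connect g w v].

Definition is_dag g : Prop := forall x, ~~ reach g x x.

Definition adj g x y : bool := g x y || g y x.

Definition moral g : Prop :=
  forall u x y, g u x -> g y x -> u != y -> adj g u y.

Definition topological_order g (pi : T -> nat) : Prop :=
  injective pi /\ forall x y, g x y -> pi x < pi y.

Definition Des g u : {set T} := [set x | reach g u x].
Definition Anc g v : {set T} := [set x | reach g x v].

(* Partially directed graphs on the skeleton of g: D is the set of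
   oriented edges (a,b), meaning a -> b; an adjacent pair oriented in
   neither direction is undirected. *)
Definition dir D a b : bool := (a, b) \in D.
Definition und g D a b : bool :=
  [&& adj g a b, (a, b) \notin D & (b, a) \notin D].

Definition init_orient g (S : {set T}) : {set T * T} :=
  [set e | g e.1 e.2 && ((e.1 \in S) != (e.2 \in S))].

Definition meekR1 g D a b : Prop :=
  exists c, dir D c a /\ ~~ adj g c b.
Definition meekR2 g D a b : Prop :=
  exists c, dir D a c /\ dir D c b.
Definition meekR3 g D a b : Prop :=
  exists c d, [/\ c != d, und g D d a /\ und g D a c,
                  dir D d b, dir D c b & ~~ adj g c d].
Definition meekR4 g D a b : Prop :=
  exists c d, [/\ b != d, und g D d a /\ und g D a c,
                  dir D d c, dir D c b & ~~ adj g b d].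

Definition meek_step g D D' : Prop :=
  exists a b, [/\ und g D a b,
     (meekR1 g D a b \/ meekR2 g D a b \/ meekR3 g D a b \/ meekR4 g D a b)
     & D' = (a, b) |: D].

(* D is a possible outcome of "apply Meek rules repeatedly until none
   applies", starting from the intervention orientation *)
Definition ess_graph_result g (S : {set T}) D : Prop :=
  clos_refl_trans _ (meek_step g) (init_orient g S) D /\
  forall D', ~ meek_step g D D'.

End Graphs.

(* Meek rules are sound: starting from the intervention
   orientation, every oriented pair (a, b) is an arc a -> b of g.  Let D be
   a Meek fixpoint.
   (1) Every strict descendant v of s1 outside S has an incoming oriented
       edge c -> v in D with c a (non-strict) descendant of s1: take the
       parent p of v below s1 with least pi; either p is in S and p -> v is
       oriented by the intervention, or by induction some c -> p is
       oriented, c and v are nonadjacent by the choice of p and acyclicity,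
       and rule R1 orients p -> v.
   (2) If moreover u is a strict ancestor of s1 (hence u is not in S, by
       minimality of s1) and u -> v, then by morality u -> c, this edge is
       oriented (by the intervention if c = s1, by induction otherwise),
       and rule R2 orients u -> v.
   Both inductions are on pi v. *)
From Stdlib Require Import Relations.
From mathcomp Require Import all_boot.
Set Implicit Arguments. Unset Strict Implicit. Unset Printing Implicit Defensive.

Section Reachability.
Variables (T : finType) (g : rel T).

Lemma reach_arc x y : g x y -> reach g x y.
Proof. by move=> gxy; apply/existsP; exists y; rewrite gxy connect0. Qed.

Lemma reach_connect_trans x y z :
  reach g x y -> connect g y z -> reach g x z.
Proof.
case/existsP=> w /andP[gxw cwy] cyz; apply/existsP; exists w.
by rewrite gxw (connect_trans cwy cyz).
Qed.

Lemma connect_eqVreach x y : connect g x y -> x = y \/ reach g x y.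
Proof.
case/connectP=> [[|w s]] /=; first by move=> _ ->; left.
case/andP=> gxw pws ly; right; apply/existsP; exists w; rewrite gxw /=.
by apply/connectP; exists s.
Qed.

Lemma reach_last_arc x y : reach g x y -> exists2 p, connect g x p & g p y.
Proof.
case/existsP=> w /andP[gxw /connectP[s]].
case/lastP: s => [_ ->|s z]; first by exists x.
rewrite rcons_path last_rcons => /andP[pws glz] ->.
exists (last w s) => //; apply: connect_trans (connect1 gxw) _.
by apply/connectP; exists s.
Qed.

Hypothesis g_dag : is_dag g.

Lemma dag_acyclic x y : reach g x y -> connect g y x -> False.
Proof. by move=> rxy cyx; move: (g_dag x); rewrite (reach_connect_trans rxy cyx). Qed.

Lemma adj_sym x y : adj g x y -> adj g y x.
Proof. by rewrite /adj orbC. Qed.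

Lemma dag_arc_asym x y : g x y -> g y x -> False.
Proof. by move=> gxy gyx; apply: dag_acyclic (reach_arc gxy) (connect1 gyx). Qed.

End Reachability.

Section Ranking.
Variables (T : finType) (g : rel T) (pi : T -> nat).
Hypothesis pi_mono : forall x y, g x y -> pi x < pi y.

Lemma connect_rank x y : connect g x y -> pi x <= pi y.
Proof.
move=> /connectP[s]; elim: s x => [|z s IH] x /=; first by move=> _ ->.
by case/andP=> /pi_mono lxz /IH hz /hz; apply: leq_trans (ltnW lxz).
Qed.

Lemma reach_rank x y : reach g x y -> pi x < pi y.
Proof. by case/existsP=> w /andP[/pi_mono lxw /connect_rank]; apply: leq_trans. Qed.

End Ranking.

Section MeekSoundness.
Variables (T : finType) (g : rel T).
Hypotheses (g_dag : is_dag g) (g_moral : moral g).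
Implicit Types (D : {set T * T}).

Definition consistent D : Prop := forall a b, dir D a b -> g a b.

Definition meek_reason D a b : Prop :=
  meekR1 g D a b \/ meekR2 g D a b \/ meekR3 g D a b \/ meekR4 g D a b.

Lemma adj_into_head x a b : adj g x a -> connect g x b -> g b a -> g x a.
Proof.
case/orP=> // gax cxb gba; case: (dag_acyclic g_dag (reach_arc gax)).
exact: connect_trans cxb (connect1 gba).
Qed.

Lemma meek_reason_sound D a b :
  consistent D -> und g D a b -> meek_reason D a b -> g a b.
Proof.
move=> hD /and3P[/orP[//|gba] _ nDba] hr; exfalso.
case: hr => [[c [dca nacb]]|[[c [dac dcb]]|[[c [d [cd [ud ua] db cb ncd]]]|
             [c [d [bd [ud ua] dc cb nbd]]]]]].
- have cb : c != b by apply: contraNneq nDba => <-.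
  by move: nacb; rewrite (g_moral (hD _ _ dca) gba cb).
- apply: (dag_acyclic g_dag (reach_arc (hD _ _ dac))).
  exact: connect_trans (connect1 (hD _ _ dcb)) (connect1 gba).
- move: ud ua => /andP[ada _] /andP[aac _].
  have gda := adj_into_head ada (connect1 (hD _ _ db)) gba.
  have gca := adj_into_head (adj_sym aac) (connect1 (hD _ _ cb)) gba.
  by move: ncd; rewrite (g_moral gca gda cd).
- move: ud ua => /andP[ada _] /andP[aac _].
  have gca := adj_into_head (adj_sym aac) (connect1 (hD _ _ cb)) gba.
  have gda := adj_into_head ada (connect1 (hD _ _ dc)) gca.
  by move: nbd; rewrite (g_moral gba gda bd).
Qed.

Lemma init_orient_consistent S : consistent (init_orient g S).
Proof. by move=> a b; rewrite /dir inE => /andP[]. Qed.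

Lemma meek_closure_sound S D :
  clos_refl_trans _ (meek_step g) (init_orient g S) D ->
  init_orient g S \subset D /\ consistent D.
Proof.
move=> /clos_rt_rtn1_iff; elim=> [|D1 _ [a [b [hu hr ->]]] _ [sub1 hD1]].
  by split; [exact: subxx | exact: init_orient_consistent].
split; first exact: subset_trans sub1 (subsetUr _ _).
move=> x y; rewrite /dir in_setU1 => /orP[/eqP[-> ->]|]; last exact: hD1.
exact: meek_reason_sound hr.
Qed.

Lemma fixpoint_orients D a b :
  consistent D -> (forall D', ~ meek_step g D D') ->
  g a b -> meek_reason D a b -> dir D a b.
Proof.
move=> hD hfix gab hr; case Dab: (dir D a b) => //; exfalso.
move/negbT: Dab => nDab.
have nDba : ~~ dir D b a.
  by apply/negP=> dba; case: (dag_arc_asym g_dag gab (hD _ _ dba)).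
by apply: (hfix ((a, b) |: D)); exists a, b; split; rewrite // /und /adj gab nDab.
Qed.

End MeekSoundness.

Section BelowFirstTarget.
Variables (T : finType) (g : rel T) (pi : T -> nat) (S : {set T}) (s1 : T).
Variable D : {set T * T}.
Hypotheses (g_dag : is_dag g) (pi_mono : forall x y, g x y -> pi x < pi y).
Hypotheses (D_init : init_orient g S \subset D) (D_cons : consistent g D).
Hypothesis D_fix : forall D', ~ meek_step g D D'.
Hypothesis s1S : s1 \in S.

Lemma intervention_orients x y :
  g x y -> (x \in S) != (y \in S) -> dir D x y.
Proof. by move=> gxy xyS; apply: (subsetP D_init); rewrite inE /= gxy. Qed.

Lemma oriented_parent v :
  reach g s1 v -> v \notin S -> exists2 c, connect g s1 c & dir D c v.
Proof.
elim: {v}(pi v).+1 {-2}v (ltnSn (pi v)) => // n IH v pvn rv vS.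
have [p0 c0 g0] := reach_last_arc rv.
have P0 : [pred p | g p v && connect g s1 p] p0 by rewrite /= g0 c0.
case: (arg_minnP pi P0) => p /andP[gpv cs1p] p_min.
case pS: (p \in S).
  by exists p => //; apply: intervention_orients; rewrite // pS (negbTE vS).
have rs1p : reach g s1 p.
  by case: (connect_eqVreach cs1p) => // ep; move: pS; rewrite -ep s1S.
have [c cs1c dcp] := IH p (leq_trans (pi_mono gpv) pvn) rs1p (negbT pS).
have gcp := D_cons dcp.
(* c is not adjacent to v: c -> v contradicts the choice of p, v -> c a cycle *)
have nacv : ~~ adj g c v.
  apply/orP=> -[gcv|gvc].
    by have := p_min c; rewrite /= gcv cs1c leqNgt (pi_mono gcp) => /(_ isT).
  apply: (dag_acyclic g_dag (reach_arc gvc)).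
  exact: connect_trans (connect1 gcp) (connect1 gpv).
exists p => //; apply: fixpoint_orients => //; left; by exists c.
Qed.

Hypothesis g_moral : moral g.
Hypothesis s1_first : forall s, s \in S -> pi s1 <= pi s.

(* an ancestor of s1 is not intervened on, as s1 comes first in S *)
Lemma ancestor_not_target u : reach g u s1 -> u \notin S.
Proof. by move=> rus; apply/negP=> /s1_first; rewrite leqNgt (reach_rank pi_mono rus). Qed.

Lemma arc_across_first_target u v :
  reach g u s1 -> reach g s1 v -> g u v -> dir D u v.
Proof.
move=> rus; elim: {v}(pi v).+1 {-2}v (ltnSn (pi v)) => // n IH v pvn rv guv.
have uS := ancestor_not_target rus.
case vS: (v \in S).
  by apply: intervention_orients; rewrite // vS (negbTE uS).
have [c cs1c dcv] := oriented_parent rv (negbT vS).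
have gcv := D_cons dcv.
(* morality of u -> v <- c; the arc goes u -> c, as c -> u would be a cycle *)
have guc : g u c.
  have uc : u != c by apply: contraTneq cs1c => <-; apply/negP/(dag_acyclic g_dag rus).
  case/orP: (g_moral guv gcv uc) => // gcu; case: (dag_acyclic g_dag rus).
  exact: connect_trans cs1c (connect1 gcu).
have duc : dir D u c.
  case: (connect_eqVreach cs1c) => [ec|rc].
    by apply: intervention_orients; rewrite // -ec s1S (negbTE uS).
  exact: IH c (leq_trans (pi_mono gcv) pvn) rc guc.
by apply: fixpoint_orients => //; right; left; exists c.
Qed.

End BelowFirstTarget.

Unset Implicit Arguments. Set Strict Implicit.

Theorem mainTheorem5 (T : finType) (g : rel T) (pi : T -> nat)
    (S : {set T}) (s1 : T) :
  is_dag g -> moral g -> topological_order g pi ->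
  s1 \in S -> (forall s, s \in S -> pi s1 <= pi s) ->
  forall u v, g u v -> s1 \in Des g u :&: Anc g v ->
  forall D, ess_graph_result g S D ->
  dir D u v || dir D v u.
Proof.
move=> g_dag g_moral [_ pi_mono] s1S s1_first u v guv.
rewrite !inE => /andP[rus rsv] D [D_closure D_fix].
have [D_init D_cons] := meek_closure_sound g_dag g_moral D_closure.
by rewrite (arc_across_first_target g_dag pi_mono D_init D_cons D_fix s1S
              g_moral s1_first rus rsv guv).
Qed.
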